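(* Let $N, M, n$ be integers with $0 \le M \le N$ and $1 \le n \le N$. Draw $n$ individuals uniformly at random without replacement from a population of $N$ individuals, of which exactly $M$ are positive, and let $i$ be the number of positive individuals among the $n$ drawn. Let $0<\delta<1$ and $c>0$, and put $x = (N/c)^2 > 0$ and $y = -\frac{1}{2}\ln(\delta/2) > 0$. Then with probability at least $1-\delta$ we have $M \in \big[\tfrac{i}{n}N - c,\ \tfrac{i}{n}N + c\big]$, provided that (S1) $n \ge \frac{(N+1)xy}{N+xy}$, in the case $N \le \frac{c^2}{y} - 2$; or (S2) $n \ge \frac{(N-1)xy}{2(N+xy)} + \sqrt{\Big(\frac{(N-1)xy}{2(N+xy)}\Big)^2 + \frac{Nxy}{N+xy}}$, in the case $N > \frac{c^2}{y} - 2$. Moreover, $\frac{(N-1)xy}{2(N+xy)} + \sqrt{\Big(\frac{(N-1)xy}{2(N+xy)}\Big)^2 + \frac{Nxy}{N+xy}} \ge \frac{Nxy}{N+xy}$.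
   Context: $i$ has the hypergeometric distribution: $\mathbb{P}[i=k] = \binom{M}{k}\binom{N-M}{n-k}/\binom{N}{n}$. $M$ is fixed (unknown) and the probability is over the random sample. *)

From HB Require Import structures.
From mathcomp Require Import all_boot all_order all_algebra.
From mathcomp Require Import reals exp.
Set Implicit Arguments. Unset Strict Implicit. Unset Printing Implicit Defensive.
Import Order.TTheory GRing.Theory Num.Theory.
Local Open Scope ring_scope.

Definition hyper_pmf (R : realType) (N M n k : nat) : R :=
  ('C(M, k) * 'C(N - M, n - k))%:R / ('C(N, n))%:R.

Definition covers (R : realType) (N M n : nat) (c : R) (k : nat) : bool :=
  (k%:R / n%:R * N%:R - c <= M%:R) && (M%:R <= k%:R / n%:R * N%:R + c).

(* P[ M \in [ (i/n) N - c, (i/n) N + c ] ] where i is hypergeometric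
   (the support of i is contained in {0,...,n}). *)
Definition prob_covers (R : realType) (N M n : nat) (c : R) : R :=
  \sum_(k < n.+1) (if covers N M n c k then hyper_pmf R N M n k else 0).

(* Hoeffding's lemma says that a two-point mixture, with weights p and 1 - p, of
   variables centred at (1 - p) s and - p s that are sub-Gaussian with variance
   proxy V is sub-Gaussian with proxy V + s^2.  Conditioning on the first
   individual drawn writes the centred hypergeometric count for (N + 1, M, m + 1)
   as such a mixture of those for (N, M - 1, m) and (N, M, m), with
   s = t (N - m) / N; by induction E exp (t (i - n M / N)) <= exp (t^2 V / 8)
   with V = n (N - n + 1) / N.  As M - i counts the positives among the N - n
   individuals not drawn, the same holds with V = (N - n) (n + 1) / N.  A
   two-sided Chernoff bound with t = 4 y / d, d = n c / N, then gives
   P (|i - n M / N| > d) <= 2 exp (- 2 y) = delta as soon as y V <= d^2, that is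
   x y V <= n^2; S1 and S2 are this inequality for the two choices of V, S2
   being the positive root of the quadratic in n. *)

From HB Require Import structures.
From mathcomp Require Import all_boot all_order all_algebra.
From mathcomp Require Import reals exp.
From mathcomp Require Import classical_sets topology normedtype sequences derive realfun.
From mathcomp Require Import zify ring lra.
Set Implicit Arguments. Unset Strict Implicit. Unset Printing Implicit Defensive.
Import Order.TTheory GRing.Theory Num.Theory.
Import numFieldNormedType.Exports.
Local Open Scope classical_set_scope.
Local Open Scope ring_scope.

Section Hoeffding.
Context {R : realType}.

Lemma ger0_is_derive_ndecr (f df : R -> R) (a b : R) :
  (forall x : R, is_derive x 1 f (df x)) -> (forall x, a <= x -> 0 <= df x) ->
  a <= b -> f a <= f b.
Proof.
move=> f_df df_ge0 ab.
have f_cont : {within `[a, b], continuous f}.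
  apply/continuous_subspaceT => x.
  by apply/differentiable_continuous/derivable1_diffP; case: (f_df x).
have [z /[!in_itv] /andP[az _] fba] := MVT_segment ab (fun x _ => f_df x) f_cont.
by rewrite -subr_ge0 fba mulr_ge0 ?df_ge0 ?subr_ge0.
Qed.

Definition bernoulli_mgf (p s : R) : R := 1 - p + p * expR s.

Lemma bernoulli_mgf_gt0 (p s : R) : 0 <= p <= 1 -> 0 < bernoulli_mgf p s.
Proof.
move=> /andP[p0 p1]; have := expR_gt0 s; rewrite /bernoulli_mgf.
have [->|p_gt0] := eqVneq p 0; first by rewrite subr0 mul0r addr0 ltr01.
by move=> e0; apply: ltr_pwDr; [rewrite mulr_gt0 // lt_def p_gt0 | rewrite subr_ge0].
Qed.

Lemma bernoulli_mgf_sqr_ge (p s : R) : 0 <= p <= 1 ->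
  4 * (p * (1 - p) * expR s) <= bernoulli_mgf p s ^+ 2.
Proof.
move=> /andP[p_ge0 p_le1]; have := sqr_ge0 (1 - p - p * expR s).
rewrite /bernoulli_mgf; nra.
Qed.

Lemma is_derive_bernoulli_mgf (p s : R) :
  is_derive s 1 (bernoulli_mgf p) (p * expR s).
Proof. by apply: is_derive_eq; rewrite add0r mul1r. Qed.

Lemma ln_bernoulli_mgf_le (p s : R) : 0 <= p <= 1 -> 0 <= s ->
  ln (bernoulli_mgf p s) <= p * s + 8^-1 * s ^+ 2.
Proof.
move=> p01 s_ge0; pose D := bernoulli_mgf p.
have D_neq0 x : D x != 0 by rewrite gt_eqF // bernoulli_mgf_gt0.
(* [h'] is the derivative of the gap [p x + x^2 / 8 - ln (D x)]; it vanishes at 0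
   and is nondecreasing since [4 p (1 - p) e^x <= D x ^+ 2]. *)
pose h' x := p + 4^-1 * x - p * expR x / D x.
have dh' (x : R) : is_derive x 1 h' (4^-1 - p * (1 - p) * expR x / D x ^+ 2).
  have dV := is_deriveV (D_neq0 x) (is_derive_bernoulli_mgf p x).
  have dpe : is_derive x 1 (fun y : R => p * expR y) (p * expR x).
    by apply: is_derive_eq.
  apply: (is_derive_eq (is_deriveB _ (is_deriveM dpe dV))).
  rewrite add0r mul1r.
  change (4^-1 * 1 - (p * expR x * (- D x ^- 2 * (p * expR x)) + (D x)^-1 * (p * expR x)) =
    4^-1 - p * (1 - p) * expR x / D x ^+ 2).
  by move: (D_neq0 x); rewrite /D /bernoulli_mgf => ?; field.
have h'_ge0 x : 0 <= x -> 0 <= h' x.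
  have h'0 : h' 0 = 0 by rewrite /h' /D /bernoulli_mgf expR0 mulr1 subrK divr1; ring.
  move=> x_ge0; rewrite -[leLHS]h'0; apply: ger0_is_derive_ndecr dh' _ x_ge0 => y _.
  rewrite subr_ge0 ler_pdivrMr ?exprn_gt0 ?bernoulli_mgf_gt0 //.
  have : 4 * (p * (1 - p) * expR y) <= D y ^+ 2 := bernoulli_mgf_sqr_ge y p01.
  lra.
have dh (x : R) : is_derive x 1 (fun y => p * y + 8^-1 * y ^+ 2 - ln (D y)) (h' x).
  have dlnD := is_derive1_comp (is_derive1_ln (bernoulli_mgf_gt0 _ p01)) (is_derive_bernoulli_mgf p x).
  apply: (is_derive_eq (is_deriveB _ dlnD)).
  change (p * 1 + 8^-1 * (x * 1 + x * 1) - (D x)^-1 * (p * expR x) = h' x).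
  by rewrite /h'; field; rewrite D_neq0.
rewrite -subr_ge0.
have <- : p * 0 + 8^-1 * 0 ^+ 2 - ln (D 0) = 0.
  by rewrite /D /bernoulli_mgf expR0 mulr1 subrK ln1 mulr0 expr0n /= mulr0 !subr0 addr0.
exact: (ger0_is_derive_ndecr dh h'_ge0 s_ge0).
Qed.

Lemma hoeffding_bernoulli (p s : R) : 0 <= p <= 1 ->
  p * expR ((1 - p) * s) + (1 - p) * expR (- (p * s)) <= expR (8^-1 * s ^+ 2).
Proof.
wlog s_ge0 : p s / 0 <= s => [hoeffding_ge0 p01|].
  have [s_ge0|s_lt0] := leP 0 s; first exact: hoeffding_ge0.
  have q01 : 0 <= 1 - p <= 1 by case/andP: p01 => *; apply/andP; split; lra.
  have Ns_ge0 : 0 <= - s by rewrite oppr_ge0 ltW.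
  by have := hoeffding_ge0 _ _ Ns_ge0 q01; rewrite subKr sqrrN !mulrN opprK addrC.
move=> p01.
have -> : p * expR ((1 - p) * s) + (1 - p) * expR (- (p * s)) =
    expR (- (p * s)) * bernoulli_mgf p s.
  by rewrite /bernoulli_mgf mulrBl mul1r expRD; ring.
rewrite -[bernoulli_mgf p s]lnK ?posrE ?bernoulli_mgf_gt0 // -expRD ler_expR.
by rewrite -lerBrDl opprK addrC ln_bernoulli_mgf_le.
Qed.

Lemma hoeffding_mixture (p s B E1 E0 : R) : 0 <= p <= 1 -> 0 <= B ->
  (p != 0 -> E1 <= expR ((1 - p) * s) * B) ->
  (p != 1 -> E0 <= expR (- (p * s)) * B) ->
  p * E1 + (1 - p) * E0 <= expR (8^-1 * s ^+ 2) * B.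
Proof.
move=> p01 B_ge0 E1_le E0_le; have [p_ge0 p_le1] := andP p01.
apply: le_trans (_ : _ <= p * (expR ((1 - p) * s) * B) + (1 - p) * (expR (- (p * s)) * B)) _.
  apply: lerD.
    by have [->|/E1_le] := eqVneq p 0; [rewrite !mul0r | apply: ler_wpM2l].
  by have [->|/E0_le] := eqVneq p 1; [rewrite subrr !mul0r | apply: ler_wpM2l; rewrite subr_ge0].
by rewrite [p * (_ * B)]mulrA [(1 - p) * (_ * B)]mulrA -mulrDl ler_wpM2r //; apply: hoeffding_bernoulli.
Qed.

End Hoeffding.

(* Counting samples together with a marked drawn individual, positive or negative. *)
Lemma first_draw_positive (N M m k : nat) :
  (M * 'C(M.-1, k) * 'C(N - M.-1, m - k) =
   k.+1 * ('C(M, k.+1) * 'C(N.+1 - M, m.+1 - k.+1)))%N.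
Proof.
rewrite mul_bin_diag -mulnA; case: M => [|M]; first by rewrite bin0n !mul0n.
by rewrite subSS.
Qed.

Lemma first_draw_negative (N M m k : nat) : (k <= m)%N ->
  ((N.+1 - M) * 'C(M, k) * 'C(N - M, m - k) =
   (m.+1 - k) * ('C(M, k) * 'C(N.+1 - M, m.+1 - k)))%N.
Proof.
move=> km; have -> : (N - M = (N.+1 - M).-1)%N by lia.
by rewrite mulnAC mul_bin_diag (subSn km) -mulnA (mulnC 'C(N.+1 - M, _)).
Qed.

Section Hypergeometric.
Context {R : realType}.

(* [hyper_pmf R N M n k] is junk for [k > n] (truncated [n - k]). *)
Definition hyper_expect (N M n : nat) (f : nat -> R) : R :=
  \sum_(0 <= k < n.+1) hyper_pmf R N M n k * f k.

Lemma hyper_pmf_ge0 (N M n k : nat) : 0 <= hyper_pmf R N M n k.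
Proof. by rewrite /hyper_pmf divr_ge0. Qed.

Lemma hyper_pmf_eq0 (N M n k : nat) : (M < k)%N -> hyper_pmf R N M n k = 0.
Proof. by move=> Mk; rewrite /hyper_pmf bin_small ?mul0n ?mul0r. Qed.

Lemma sum_hyper_pmf (N M n : nat) : (M <= N)%N -> (n <= N)%N ->
  \sum_(k < n.+1) hyper_pmf R N M n k = 1.
Proof.
move=> MN nN; rewrite /hyper_pmf -mulr_suml -natr_sum binomial.Vandermonde subnKC //.
by rewrite divff // pnatr_eq0 -lt0n bin_gt0.
Qed.

Lemma hyper_expect_cst (N M n : nat) (a : R) : (M <= N)%N -> (n <= N)%N ->
  hyper_expect N M n (fun=> a) = a.
Proof. by move=> MN nN; rewrite /hyper_expect -mulr_suml big_mkord sum_hyper_pmf ?mul1r. Qed.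

Lemma hyper_expectD (N M n : nat) (f g : nat -> R) :
  hyper_expect N M n (fun k => f k + g k) = hyper_expect N M n f + hyper_expect N M n g.
Proof. by rewrite /hyper_expect -big_split; apply: eq_bigr => k _; rewrite mulrDr. Qed.

Lemma hyper_expectZ (N M n : nat) (a : R) (f : nat -> R) :
  hyper_expect N M n (fun k => a * f k) = a * hyper_expect N M n f.
Proof. by rewrite /hyper_expect mulr_sumr; apply: eq_bigr => k _; rewrite mulrCA. Qed.

Lemma ler_hyper_expect (N M n : nat) (f g : nat -> R) : (forall k, f k <= g k) ->
  hyper_expect N M n f <= hyper_expect N M n g.
Proof. by move=> fg; apply: ler_sum => k _; rewrite ler_wpM2l ?hyper_pmf_ge0. Qed.

Lemma eq_hyper_expect (N M n : nat) (f g : nat -> R) :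
  (forall k, (k <= M)%N -> f k = g k) -> hyper_expect N M n f = hyper_expect N M n g.
Proof.
move=> fg; apply: eq_bigr => k _.
by have [/fg ->|/hyper_pmf_eq0 ->] := leqP k M; rewrite ?mul0r.
Qed.

Lemma hyper_expect_first_draw (N M m : nat) (f : nat -> R) :
  (m <= N)%N -> (M <= N.+1)%N ->
  hyper_expect N.+1 M m.+1 f =
    M%:R / N.+1%:R * hyper_expect N M.-1 m (f \o succn)
    + (1 - M%:R / N.+1%:R) * hyper_expect N M m f.
Proof.
move=> mN MN; pose W k : R := ('C(M, k) * 'C(N.+1 - M, m.+1 - k))%:R.
have CN_neq0 : ('C(N, m)%:R : R) != 0 by rewrite pnatr_eq0 -lt0n bin_gt0.
have N1_neq0 : (N.+1%:R : R) != 0 by rewrite pnatr_eq0.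
have CN1E : ('C(N.+1, m.+1)%:R : R) = N.+1%:R * 'C(N, m)%:R / m.+1%:R.
  by rewrite -natrM mul_bin_diag natrM mulrC mulKf // pnatr_eq0.
have pos : \sum_(0 <= k < m.+1) (M * 'C(M.-1, k) * 'C(N - M.-1, m - k))%:R * f k.+1 =
    \sum_(0 <= k < m.+2) k%:R * W k * f k.
  rewrite [RHS]big_nat_recl // mul0r mul0r add0r.
  by apply: eq_bigr => k _; rewrite first_draw_positive natrM /W.
have neg : \sum_(0 <= k < m.+1) ((N.+1 - M) * 'C(M, k) * 'C(N - M, m - k))%:R * f k =
    \sum_(0 <= k < m.+2) (m.+1 - k)%:R * W k * f k.
  rewrite [RHS]big_nat_recr //= subnn mul0r mul0r addr0.
  apply: eq_big_nat => k /andP[_]; rewrite ltnS => km.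
  by rewrite first_draw_negative // natrM /W.
have -> : 1 - M%:R / N.+1%:R = (N.+1 - M)%:R / N.+1%:R :> R.
  by rewrite natrB // mulrBl divff.
rewrite [LHS](_ : _ = (\sum_(0 <= k < m.+2) (k%:R * W k * f k + (m.+1 - k)%:R * W k * f k))
    / (N.+1%:R * 'C(N, m)%:R)); last first.
  rewrite /hyper_expect mulr_suml; apply: eq_big_nat => k /andP[_ km].
  rewrite -!mulrDl -natrD subnKC // /hyper_pmf CN1E /W.
  by field; rewrite !nat1r CN_neq0 N1_neq0 pnatr_eq0.
rewrite big_split /= -pos -neg mulrDl /hyper_expect !mulr_sumr !mulr_suml.
by congr (_ + _); apply: eq_bigr => k _; rewrite /hyper_pmf !natrM /=; field; rewrite nat1r CN_neq0.
Qed.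

Lemma hyper_pmf_compl (N M n j : nat) : (M <= N)%N -> (n <= N)%N -> (j <= M)%N ->
  (if (M - j <= n)%N then hyper_pmf R N M n (M - j)%N else 0) =
  (if (j <= N - n)%N then hyper_pmf R N M (N - n)%N j else 0).
Proof.
move=> MN nN jM; rewrite /hyper_pmf (bin_sub nN) (bin_sub jM).
case: ifP => Mjn; case: ifP => jNn //.
- have -> : (n - (M - j) = (N - M) - (N - n - j))%N by lia.
  by rewrite bin_sub //; lia.
all: by rewrite [X in (_ * X)%N]bin_small ?muln0 ?mul0r //; lia.
Qed.

Lemma hyper_expect_restrict (N M n : nat) (f : nat -> R) : (M <= N)%N -> (n <= N)%N ->
  hyper_expect N M n f =
    \sum_(0 <= k < M.+1) (if (k <= n)%N then hyper_pmf R N M n k else 0) * f k.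
Proof.
move=> MN nN; rewrite /hyper_expect (big_nat_widen _ _ N.+1) // [RHS](big_nat_widen _ _ N.+1) //.
rewrite big_mkcond [RHS]big_mkcond /=; apply: eq_big_nat => k _.
by rewrite !ltnS; have [_|/hyper_pmf_eq0 ->] := leqP k M; case: ifP; rewrite ?mul0r.
Qed.

(* [M - i] counts the positives among the [N - n] individuals not drawn. *)
Lemma hyper_expect_compl (N M n : nat) (f : nat -> R) : (M <= N)%N -> (n <= N)%N ->
  hyper_expect N M n f = hyper_expect N M (N - n) (fun j => f (M - j)%N).
Proof.
move=> MN nN; rewrite !hyper_expect_restrict ?leq_subr // big_nat_rev add0n.
by apply: eq_big_nat => j /andP[_ jM]; rewrite subSS hyper_pmf_compl.
Qed.

End Hypergeometric.

Section HypergeometricMgf.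
Context {R : realType}.

Definition hyper_mgf (N M n : nat) (t : R) : R :=
  hyper_expect N M n (fun k => expR (t * (k%:R - n%:R * M%:R / N%:R))).

Definition hyper_vproxy (m N : nat) : R := m%:R * (N%:R - m%:R + 1) / N%:R.

Lemma hyper_vproxy0 (N : nat) : hyper_vproxy 0 N = 0.
Proof. by rewrite /hyper_vproxy !mul0r. Qed.

Lemma hyper_vproxy_ge0 (m N : nat) : (m <= N)%N -> 0 <= hyper_vproxy m N.
Proof. by move=> mN; rewrite divr_ge0 // mulr_ge0 // addr_ge0 // subr_ge0 ler_nat. Qed.

Lemma hyper_vproxyS (m N : nat) : (m <= N)%N ->
  hyper_vproxy m N + ((N%:R - m%:R) / N%:R) ^+ 2 <= hyper_vproxy m.+1 N.+1.
Proof.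
move=> mN; rewrite /hyper_vproxy -!natr1.
have [N0|N_gt0] := posnP N.
  by move: mN; rewrite N0 leqn0 => /eqP->; rewrite !(subrr, mul0r, add0r, expr0n, divr1) mulr1.
have mNR : (m%:R <= N%:R :> R) by rewrite ler_nat.
have NR_gt0 : (0 : R) < N%:R by rewrite ltr0n.
rewrite -subr_ge0.
have -> : (m%:R + 1) * (N%:R + 1 - (m%:R + 1) + 1) / (N%:R + 1) -
    (m%:R * (N%:R - m%:R + 1) / N%:R + ((N%:R - m%:R) / N%:R) ^+ 2) =
    (N%:R - m%:R) * m%:R / (N%:R ^+ 2 * (N%:R + 1)) :> R.
  by field; rewrite !gt_eqF // ltr_wpDl.
by rewrite divr_ge0 ?mulr_ge0 ?ler0n ?subr_ge0 ?exprn_ge0 ?addr_ge0 // ltW.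
Qed.

Lemma centered_draw_positive (N M m k : nat) :
  (m <= N)%N -> (0 < M <= N.+1)%N ->
  k.+1%:R - m.+1%:R * M%:R / N.+1%:R =
    k%:R - m%:R * M.-1%:R / N%:R + (1 - M%:R / N.+1%:R) * ((N%:R - m%:R) / N%:R) :> R.
Proof.
case: M => // M mN /= MN; have [N0|N_gt0] := posnP N.
  move: mN MN; rewrite N0 leqn0 ltnS leqn0 => /eqP-> /eqP->.
  by rewrite !(mul0r, subrr, add0r, mulr0, subr0, mul1r, divr1) addr0 -natr1 addrK.
by rewrite -!natr1; field; rewrite natr1 !pnatr_eq0 -lt0n N_gt0.
Qed.

Lemma centered_draw_negative (N M m k : nat) : (m <= N)%N -> (M <= N)%N ->
  k%:R - m.+1%:R * M%:R / N.+1%:R =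
    k%:R - m%:R * M%:R / N%:R - M%:R / N.+1%:R * ((N%:R - m%:R) / N%:R) :> R.
Proof.
move=> mN MN; have [N0|N_gt0] := posnP N.
  move: mN MN; rewrite N0 !leqn0 => /eqP-> /eqP->.
  by rewrite !(mul0r, mulr0, subr0).
by rewrite -!natr1; field; rewrite natr1 !pnatr_eq0 -lt0n N_gt0.
Qed.

Lemma hyper_mgf_le (N M m : nat) (t : R) : (m <= N)%N -> (M <= N)%N ->
  hyper_mgf N M m t <= expR (8^-1 * t ^+ 2 * hyper_vproxy m N).
Proof.
elim: m N M => [|m IH] N M mN MN.
  rewrite /hyper_mgf /hyper_expect big_nat1 /hyper_pmf hyper_vproxy0.
  by rewrite !subn0 !bin0 mul1n divr1 !mul0r subr0 !mulr0 mul1r.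
case: N mN MN => // N; rewrite ltnS => mN MN.
rewrite /hyper_mgf hyper_expect_first_draw //.
set p : R := M%:R / N.+1%:R; set a : R := (N%:R - m%:R) / N%:R.
have p01 : 0 <= p <= 1 by rewrite divr_ge0 //= ler_pdivrMr ?ltr0n // mul1r ler_nat.
apply: le_trans (_ : _ <= expR (8^-1 * (t * a) ^+ 2) * expR (8^-1 * t ^+ 2 * hyper_vproxy m N)) _.
  apply: hoeffding_mixture; rewrite ?expR_ge0 //.
    move=> p_neq0.
    have M_gt0 : (0 < M)%N by rewrite lt0n; apply: contra_neq p_neq0 => M0; rewrite /p M0 mul0r.
    rewrite [X in X <= _](_ : _ = expR ((1 - p) * (t * a)) * hyper_mgf N M.-1 m t).
      by rewrite ler_wpM2l ?expR_ge0 // IH //; lia.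
    rewrite /hyper_mgf -hyper_expectZ; apply: eq_hyper_expect => k _ /=.
    by rewrite -expRD centered_draw_positive ?M_gt0 // mulrDr mulrCA addrC.
  move=> p_neq1; have MN' : (M <= N)%N.
    rewrite leqNgt; apply: contra p_neq1 => NM.
    have MN1 : M = N.+1 by apply/eqP; rewrite eqn_leq MN.
    by rewrite /p MN1 divff ?pnatr_eq0.
  rewrite [X in X <= _](_ : _ = expR (- (p * (t * a))) * hyper_mgf N M m t).
    by rewrite ler_wpM2l ?expR_ge0 // IH.
  rewrite /hyper_mgf -hyper_expectZ; apply: eq_hyper_expect => k _ /=.
  by rewrite -expRD centered_draw_negative // mulrBr mulrCA addrC.
rewrite -expRD ler_expR exprMn mulrA -mulrDr addrC ler_wpM2l ?hyper_vproxyS //.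
by rewrite mulr_ge0 ?invr_ge0 ?sqr_ge0.
Qed.

Lemma hyper_mgf_compl (N M n : nat) (t : R) : (M <= N)%N -> (n <= N)%N ->
  hyper_mgf N M n t = hyper_mgf N M (N - n) (- t).
Proof.
move=> MN nN; rewrite /hyper_mgf hyper_expect_compl //.
apply: eq_hyper_expect => j jM; congr expR; rewrite !natrB //.
have [N0|N_gt0] := posnP N.
  have [-> ->] : M = 0%N /\ j = 0%N by lia.
  by rewrite !(subrr, mulr0, mul0r).
by field; rewrite pnatr_eq0 -lt0n.
Qed.

End HypergeometricMgf.

Section Concentration.
Context {R : realType}.

Lemma one_sub_prob_covers (N M n : nat) (c : R) : (M <= N)%N -> (n <= N)%N ->
  1 - prob_covers N M n c = hyper_expect N M n (fun k => (~~ covers N M n c k)%:R).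
Proof.
move=> MN nN; have -> : prob_covers N M n c = hyper_expect N M n (fun k => (covers N M n c k)%:R).
  rewrite /prob_covers /hyper_expect big_mkord.
  by apply: eq_bigr => k _; case: covers; rewrite ?mulr1 ?mulr0.
apply/eqP; rewrite subr_eq -hyper_expectD -[X in X == _](hyper_expect_cst 1 MN nN).
by apply/eqP/eq_bigr => k _; case: covers; rewrite /= ?add0r ?addr0.
Qed.

Lemma not_covers_gt (N M n k : nat) (c : R) : (0 < n)%N -> (0 < N)%N ->
  ~~ covers N M n c k -> n%:R * c / N%:R < `|k%:R - n%:R * M%:R / N%:R|.
Proof.
move=> n_gt0 N_gt0; rewrite /covers -ler_distl -ltNge.
have nR : (0 : R) < n%:R by rewrite ltr0n.
have NR : (0 : R) < N%:R by rewrite ltr0n.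
have -> : M%:R - k%:R / n%:R * N%:R = - (N%:R / n%:R) * (k%:R - n%:R * M%:R / N%:R) :> R.
  by field; rewrite !gt_eqF.
rewrite normrM normrN (gtr0_norm (divr_gt0 NR nR)) -ltr_pdivrMl ?divr_gt0 //.
by rewrite invf_div mulrAC.
Qed.

Lemma hyper_chernoff (N M n : nat) (c t : R) :
  (0 < n)%N -> (n <= N)%N -> (M <= N)%N -> 0 <= t ->
  1 - prob_covers N M n c <=
    expR (- (t * (n%:R * c / N%:R))) * (hyper_mgf N M n t + hyper_mgf N M n (- t)).
Proof.
move=> n_gt0 nN MN t_ge0; have N_gt0 : (0 < N)%N := leq_trans n_gt0 nN.
rewrite one_sub_prob_covers // mulrDr /hyper_mgf -!hyper_expectZ -hyper_expectD.
apply: ler_hyper_expect => k; rewrite -!expRD.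
set d := n%:R * c / N%:R; set x := k%:R - n%:R * M%:R / N%:R.
case: (boolP (covers N M n c k)) => [_|/(not_covers_gt n_gt0 N_gt0)]; first by rewrite addr_ge0 ?expR_ge0.
rewrite -/d -/x => d_lt_x.
have le1 : 1 <= expR (- (t * d) + t * `|x|).
  by rewrite -expR0 ler_expR addrC subr_ge0 ler_wpM2l // ltW.
have [x_ge0|x_lt0] := lerP 0 x.
  by rewrite ger0_norm // in le1; apply: (le_trans le1); rewrite lerDl expR_ge0.
rewrite ltr0_norm // mulrN -[- (t * x)]mulNr in le1.
by apply: (le_trans le1); rewrite lerDr expR_ge0.
Qed.

Lemma hyper_covers_ge (N M n : nat) (c V y : R) :
  (0 < n)%N -> (n <= N)%N -> (M <= N)%N -> 0 < c -> 0 <= y -> 0 <= V ->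
  (forall t, hyper_mgf N M n t <= expR (8^-1 * t ^+ 2 * V)) ->
  (N%:R / c) ^+ 2 * y * V <= n%:R ^+ 2 ->
  1 - 2 * expR (- (2 * y)) <= prob_covers N M n c.
Proof.
move=> n_gt0 nN MN c_gt0 y_ge0 V_ge0 mgf_le xyV_le.
have N_gt0 : (0 : R) < N%:R by rewrite ltr0n (leq_trans n_gt0 nN).
set d := n%:R * c / N%:R.
have d_gt0 : 0 < d by rewrite /d divr_gt0 // mulr_gt0 // ltr0n.
have yV_le : y * V <= d ^+ 2.
  have x_gt0 : 0 < (N%:R / c) ^+ 2 by rewrite exprn_gt0 ?divr_gt0.
  rewrite (_ : d ^+ 2 = n%:R ^+ 2 / (N%:R / c) ^+ 2); last by rewrite /d; field; rewrite !gt_eqF.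
  by rewrite ler_pdivlMr // mulrC mulrA.
set t := 4 * y / d.
have t_ge0 : 0 <= t by apply: divr_ge0 (ltW d_gt0); rewrite mulr_ge0 ?ler0n.
rewrite lerBlDr addrC -lerBlDr.
apply: le_trans (hyper_chernoff c n_gt0 nN MN t_ge0) _; rewrite -/d.
apply: le_trans (_ : _ <= expR (- (t * d)) * (2 * expR (8^-1 * t ^+ 2 * V))) _.
  rewrite ler_wpM2l ?expR_ge0 // mulr_natl mulr2n.
  by apply: lerD; rewrite // -[t ^+ 2]sqrrN.
rewrite mulrCA -expRD ler_wpM2l // ler_expR.
have -> : - (t * d) + 8^-1 * t ^+ 2 * V = - (4 * y) + 2 * y * (y * V / d ^+ 2).
  by rewrite /t; field; rewrite gt_eqF.
have : y * V / d ^+ 2 <= 1 by rewrite ler_pdivrMr ?exprn_gt0 // mul1r.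
nra.
Qed.

End Concentration.

Section SampleSize.
Context {R : realType}.

Lemma quadratic_root_le (A B z : R) : 0 <= A ^+ 2 + B ->
  A + Num.sqrt (A ^+ 2 + B) <= z -> 2 * A * z + B <= z ^+ 2.
Proof.
move=> D_ge0 root_le; have s_ge0 := sqrtr_ge0 (A ^+ 2 + B).
have := sqr_sqrtr D_ge0; set s := Num.sqrt _ in s_ge0 root_le *.
nra.
Qed.

Lemma le_quadratic_root (A B z : R) : 0 <= A ^+ 2 + B ->
  z ^+ 2 <= 2 * A * z + B -> z <= A + Num.sqrt (A ^+ 2 + B).
Proof.
move=> D_ge0 z_le; rewrite -lerBlDl; apply: le_trans (ler_norm _) _.
by rewrite -sqrtr_sqr ler_sqrt //; lra.
Qed.

Lemma vproxy_le_of_S1 (Nr nr x y : R) : 0 < Nr -> 0 < nr -> 0 <= x * y ->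
  (Nr + 1) * x * y / (Nr + x * y) <= nr -> x * y * (nr * (Nr - nr + 1) / Nr) <= nr ^+ 2.
Proof.
move=> N_gt0 n_gt0 K_ge0; rewrite -[(Nr + 1) * x * y]mulrA; set K := x * y in K_ge0 *.
rewrite ler_pdivrMr; last by lra.
by move=> S1; rewrite mulrA ler_pdivrMr //; nra.
Qed.

Lemma vproxy_le_of_S2 (Nr nr x y : R) : 0 < Nr -> 0 <= x * y ->
  let A := (Nr - 1) * x * y / (2 * (Nr + x * y)) in
  A + Num.sqrt (A ^+ 2 + Nr * x * y / (Nr + x * y)) <= nr ->
  x * y * ((Nr - nr) * (nr + 1) / Nr) <= nr ^+ 2.
Proof.
move=> N_gt0 K_ge0 A; rewrite /A -[(Nr - 1) * x * y]mulrA -[Nr * x * y]mulrA; set K := x * y in K_ge0 *.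
have D_gt0 : 0 < Nr + K by lra.
have B_ge0 : 0 <= Nr * K / (Nr + K) by apply: divr_ge0; [apply: mulr_ge0|]; lra.
move/(quadratic_root_le (addr_ge0 (sqr_ge0 _) B_ge0)).
have -> : 2 * ((Nr - 1) * K / (2 * (Nr + K))) * nr + Nr * K / (Nr + K) =
  ((Nr - 1) * K * nr + Nr * K) / (Nr + K) by field; rewrite gt_eqF.
rewrite ler_pdivrMr // mulrA ler_pdivrMr //.
nra.
Qed.

Lemma ratio_le_S2 (Nr x y : R) : 0 <= Nr -> 0 <= x * y ->
  Nr * x * y / (Nr + x * y) <= (Nr - 1) * x * y / (2 * (Nr + x * y))
    + Num.sqrt (((Nr - 1) * x * y / (2 * (Nr + x * y))) ^+ 2 + Nr * x * y / (Nr + x * y)).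
Proof.
move=> N_ge0 K_ge0; rewrite -[(Nr - 1) * x * y]mulrA -[Nr * x * y]mulrA.
set K := x * y in K_ge0 *; set B := Nr * K / (Nr + K).
have B_ge0 : 0 <= B by apply: divr_ge0; [apply: mulr_ge0 | apply: addr_ge0].
apply: le_quadratic_root; first by rewrite addr_ge0 ?sqr_ge0.
have [D0|D_neq0] := eqVneq (Nr + K) 0; first by rewrite /B D0 !invr0 !mulr0 expr0n addr0.
rewrite -subr_ge0.
have -> : 2 * ((Nr - 1) * K / (2 * (Nr + K))) * B + B - B ^+ 2 = B * (Nr / (Nr + K)).
  by rewrite /B; field.
by apply/mulr_ge0/divr_ge0 => //; apply: addr_ge0.
Qed.

End SampleSize.

Theorem lemma8 (R : realType) (N M n : nat) (delta c : R) :
  (M <= N)%N -> (1 <= n)%N -> (n <= N)%N ->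
  0 < delta -> delta < 1 -> 0 < c ->
  let x : R := (N%:R / c) ^+ 2 in
  let y : R := - (1 / 2) * ln (delta / 2) in
  let A : R := (N%:R - 1) * x * y / (2 * (N%:R + x * y)) in
  let S2 : R := A + Num.Def.sqrtr (A ^+ 2 + N%:R * x * y / (N%:R + x * y)) in
  ((((N%:R <= c ^+ 2 / y - 2) /\ ((N%:R + 1) * x * y / (N%:R + x * y) <= n%:R))
    \/ ((c ^+ 2 / y - 2 < N%:R) /\ (S2 <= n%:R))) ->
     1 - delta <= prob_covers N M n c)
  /\ (N%:R * x * y / (N%:R + x * y) <= S2).
Proof.
move=> MN n_gt0 nN delta_gt0 delta_lt1 c_gt0 x y A S2.
have N_gt0 : (0 : R) < N%:R by rewrite ltr0n (leq_trans n_gt0 nN).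
have y_gt0 : 0 < y.
  rewrite /y mulNr oppr_gt0 pmulr_rlt0 ?divr_gt0 // ln_lt0 // divr_gt0 //=.
  by rewrite ltr_pdivrMr //; lra.
have K_ge0 : 0 <= x * y by rewrite mulr_ge0 ?sqr_ge0 ?ltW.
split=> [size_cond|]; last exact: ratio_le_S2 (ltW N_gt0) K_ge0.
have [V [V_ge0 mgf_le xyV_le]] : exists V, [/\ 0 <= V,
    forall t, hyper_mgf N M n t <= expR (8^-1 * t ^+ 2 * V) & x * y * V <= n%:R ^+ 2].
  (* The conditions on [N] only tell which variance proxy is smaller. *)
  case: size_cond => [[_ S1] | [_ S2_le]].
    exists (hyper_vproxy n N); split; first exact: hyper_vproxy_ge0.
      by move=> t; apply: hyper_mgf_le.
    by apply: vproxy_le_of_S1; rewrite // ltr0n.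
  exists (hyper_vproxy (N - n) N); split; first by rewrite hyper_vproxy_ge0 ?leq_subr.
    by move=> t; rewrite hyper_mgf_compl // -[t ^+ 2]sqrrN hyper_mgf_le ?leq_subr.
  rewrite /hyper_vproxy natrB // (_ : N%:R - (N%:R - n%:R) + 1 = n%:R + 1); last by ring.
  exact: vproxy_le_of_S2.
have := hyper_covers_ge n_gt0 nN MN c_gt0 (ltW y_gt0) V_ge0 mgf_le xyV_le.
suff -> : 2 * expR (- (2 * y)) = delta by [].
rewrite /y (_ : - (2 * _) = ln (delta / 2)); last by field.
by rewrite lnK ?posrE ?divr_gt0 //; field.
Qed.
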